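(* The group $Fr(162\times 4)$ is not isomorphic to any group $C(n,a,b)$ ($n$ a positive integer, $a,b$ integers).
   Context: For a positive integer $n$ and integers $a,b$, let $\eta=e^{2i\pi/n}$, $F(n,a,b)=\mathrm{diag}(\eta^a,\eta^b,\eta^{-a-b})$, $E=\begin{pmatrix}0&1&0\\0&0&1\\1&0&0\end{pmatrix}$, and $C(n,a,b)=\langle F(n,a,b),E\rangle\subset SU(3)$. Let $\omega=e^{2i\pi/3}$, $J$ the antidiagonal matrix with antidiagonal entries $1$, $G_1=\mathrm{diag}(e^{7i\pi/9},-e^{4i\pi/9},-e^{7i\pi/9})$, $G_2=\begin{pmatrix}-\tfrac12 e^{4i\pi/9}&\tfrac{1}{\sqrt2}e^{7i\pi/9}&\tfrac12 e^{4i\pi/9}\\ \tfrac{1}{\sqrt2}e^{7i\pi/9}&0&\tfrac{1}{\sqrt2}e^{7i\pi/9}\\ \tfrac12 e^{4i\pi/9}&\tfrac{1}{\sqrt2}e^{7i\pi/9}&-\tfrac12 e^{4i\pi/9}\end{pmatrix}$, $FUM=-\omega J$, $Fr(162\times 4)=\langle G_1,G_2,FUM\rangle$. *)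

From HB Require Import structures.
From mathcomp Require Import all_boot all_order all_algebra all_field.
Set Implicit Arguments. Unset Strict Implicit. Unset Printing Implicit Defensive.
Import Order.TTheory GRing.Theory Num.Theory.
Local Open Scope ring_scope.

Notation M3 := 'M[algC]_3.

(* e^{i pi / m}: the m-th root of -1 with maximal real part among those with
   nonnegative imaginary part (see rootC_Re_max). *)
Definition epi (m : nat) : algC := m.-root (-1).

Definition eta_ (n : nat) : algC := epi n ^+ 2.

Definition diag3 (x y z : algC) : M3 :=
  \matrix_(i < 3, j < 3)
    (if i == j then (if val i == 0%N then x else if val i == 1%N then y else z)
     else 0).

Definition mx3 (a00 a01 a02 a10 a11 a12 a20 a21 a22 : algC) : M3 :=
  \matrix_(i < 3, j < 3)
    (match val i, val j with
     | 0, 0 => a00 | 0, 1 => a01 | 0, _ => a02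
     | 1, 0 => a10 | 1, 1 => a11 | 1, _ => a12
     | _, 0 => a20 | _, 1 => a21 | _, _ => a22 end)%N.

Definition Fmx (n : nat) (a b : int) : M3 :=
  diag3 (eta_ n ^ a) (eta_ n ^ b) (eta_ n ^ (- a - b)).

Definition Emx : M3 := mx3 0 1 0  0 0 1  1 0 0.

Inductive gen_group (gens : seq M3) : M3 -> Prop :=
  | gen_one : gen_group gens 1%:M
  | gen_base g : g \in gens -> gen_group gens g
  | gen_mul x y : gen_group gens x -> gen_group gens y -> gen_group gens (x *m y)
  | gen_inv x : gen_group gens x -> gen_group gens (invmx x).

Definition Cgrp (n : nat) (a b : int) : M3 -> Prop :=
  gen_group [:: Fmx n a b; Emx].

Definition omega : algC := epi 3 ^+ 2.
Definition Jmx : M3 := mx3 0 0 1  0 1 0  1 0 0.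
Definition e79 : algC := epi 9 ^+ 7.
Definition e49 : algC := epi 9 ^+ 4.
Definition isq2 : algC := (sqrtC 2)^-1.
Definition G1 : M3 := diag3 e79 (- e49) (- e79).
Definition G2 : M3 :=
  mx3 (- (2^-1 * e49)) (isq2 * e79) (2^-1 * e49)
      (isq2 * e79)     0            (isq2 * e79)
      (2^-1 * e49)     (isq2 * e79) (- (2^-1 * e49)).
Definition FUM : M3 := - (omega *: Jmx).

Definition Fr162x4 : M3 -> Prop := gen_group [:: G1; G2; FUM].

Definition grp_isomorphic (P Q : M3 -> Prop) : Prop :=
  exists f : M3 -> M3,
    [/\ forall x, P x -> Q (f x),
        forall x y, P x -> P y -> f x = f y -> x = y,
        forall y, Q y -> exists2 x, P x & f x = y
      & forall x y, P x -> P y -> f (x *m y) = f x *m f y].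

From HB Require Import structures.
From mathcomp Require Import all_boot all_order all_algebra all_field.
From mathcomp Require Import ring.
Import GRing.Theory Num.Theory.
Local Open Scope ring_scope.

(* Every element of C(n,a,b) = <F, E> has the form D E^k with D
   an invertible diagonal matrix: diagonal matrices are normalised by the
   cyclic permutation matrix E, so the set of such "E-monomial" matrices is
   closed under products and inverses, and contains F and E.  Since E^3 = 1,
   the cube of D E^k is again diagonal, so any two cubes in C(n,a,b) commute.
   This property is invariant under group isomorphism.  In Fr(162 x 4),
   however, cube G1 (diagonal with distinct first and last entries) does not
   commute with cube FUM (a scalar multiple of the antidiagonal J), which
   proves the theorem. *)

(* Entrywise verification of an identity between explicit 3x3 matrices. *)
Ltac mx3_ext :=
  apply/matrixP; case=> [[|[|[|?]]] ?] //; case=> [[|[|[|?]]] ?] //;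
  do 3 (rewrite ?mxE ?big_ord_recr ?big_ord0 /= ?mxE); rewrite -?val_eqE /=;
  try ring.

Lemma diag3_mul x y z u v w :
  diag3 x y z *m diag3 u v w = diag3 (x * u) (y * v) (z * w).
Proof. by mx3_ext. Qed.

Lemma diag3_one : diag3 1 1 1 = 1%:M.
Proof. by mx3_ext. Qed.

Lemma Emx_diag3 x y z : Emx *m diag3 x y z = diag3 y z x *m Emx.
Proof. by mx3_ext. Qed.

Lemma Emx_cube : Emx *m (Emx *m Emx) = 1%:M.
Proof. by mx3_ext. Qed.

Lemma Jmx_diag3 x y z : Jmx *m diag3 x y z = diag3 z y x *m Jmx.
Proof. by mx3_ext. Qed.

Lemma diag3_Jmx_02 x y z : (diag3 x y z *m Jmx) 0 2 = x.
Proof. rewrite !mxE !big_ord_recr big_ord0 /= !mxE /=; ring. Qed.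

Lemma epi_neq0 {m} : (0 < m)%N -> epi m != 0.
Proof.
move=> m_gt0; apply/eqP=> epi0; have := rootCK m_gt0 (-1 : algC).
rewrite -/(epi m) epi0 expr0n gtn_eqF // => /eqP.
by rewrite eq_sym oppr_eq0 oner_eq0.
Qed.

Definition unit_diag (D : M3) : Prop :=
  exists x y z, [/\ x != 0, y != 0, z != 0 & D = diag3 x y z].

Lemma unit_diag_mul D1 D2 : unit_diag D1 -> unit_diag D2 -> unit_diag (D1 *m D2).
Proof.
move=> [x [y [z [x0 y0 z0 ->]]]] [u [v [w [u0 v0 w0 ->]]]].
by exists (x * u), (y * v), (z * w); split; rewrite ?mulf_neq0 ?diag3_mul.
Qed.

Lemma unit_diag_comm D1 D2 : unit_diag D1 -> unit_diag D2 -> D1 *m D2 = D2 *m D1.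
Proof.
move=> [x [y [z [_ _ _ ->]]]] [u [v [w [_ _ _ ->]]]].
by rewrite !diag3_mul (mulrC x) (mulrC y) (mulrC z).
Qed.

Fixpoint Epow (k : nat) : M3 := if k is k'.+1 then Emx *m Epow k' else 1%:M.

Lemma EpowD k l : Epow (k + l) = Epow k *m Epow l.
Proof. by elim: k => [|k IH] /=; rewrite ?mul1mx // IH mulmxA. Qed.

Lemma Epow_3mul k : Epow (k + k + k) = 1%:M.
Proof.
have -> : (k + k + k = 3 * k)%N by rewrite !mulSn mul0n addn0 addnA.
by elim: k => [|k IH] //; rewrite mulnS EpowD IH mulmx1 /= mulmx1 Emx_cube.
Qed.

Lemma Epow_unit_diag k D :
  unit_diag D -> exists2 D', unit_diag D' & Epow k *m D = D' *m Epow k.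
Proof.
elim: k D => [|k IH] D uD /=; first by exists D; rewrite ?mul1mx ?mulmx1.
have [_ [x [y [z [x0 y0 z0 ->]]]] eD] := IH D uD.
exists (diag3 y z x); first by exists y, z, x.
by rewrite -mulmxA eD mulmxA Emx_diag3 mulmxA.
Qed.

Definition Emonomial (k : nat) (M : M3) : Prop :=
  exists2 D, unit_diag D & M = D *m Epow k.

Lemma Emonomial_mul {k l M N} :
  Emonomial k M -> Emonomial l N -> Emonomial (k + l) (M *m N).
Proof.
move=> [D uD ->] [D2 uD2 ->].
have [D3 uD3 eD] := @Epow_unit_diag k D2 uD2.
exists (D *m D3); first exact: unit_diag_mul.
by rewrite EpowD -!mulmxA (mulmxA (Epow k)) eD -!mulmxA.
Qed.

(* (D E^k)^-1 = E^(2k) D^-1, since E^(3k) = 1. *)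
Lemma Emonomial_inv k M : Emonomial k M -> Emonomial (k + k) (invmx M).
Proof.
move=> [D [x [y [z [x0 y0 z0 eD]]]] ->].
set Di := diag3 x^-1 y^-1 z^-1.
have uDi : unit_diag Di by exists x^-1, y^-1, z^-1; rewrite !invr_eq0.
have right_inv : D *m Epow k *m (Epow (k + k) *m Di) = 1%:M.
  rewrite -mulmxA (mulmxA (Epow k)) -EpowD addnA Epow_3mul.
  by rewrite mul1mx eD diag3_mul !mulfV // diag3_one.
have [unitM _] := mulmx1_unit right_inv.
have -> : invmx (D *m Epow k) = Epow (k + k) *m Di.
  by rewrite -[invmx _]mulmx1 -right_inv (mulmxA (invmx _) (D *m Epow k)) mulVmx // mul1mx.
by have [D' uD' ->] := @Epow_unit_diag (k + k) Di uDi; exists D'.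
Qed.

Lemma Cgrp_Emonomial {n a b M} : (0 < n)%N -> Cgrp n a b M -> exists k, Emonomial k M.
Proof.
move=> n_gt0; elim=> [|g|x y _ [k Mx] _ [l My]|x _ [k Mx]].
- by exists 0%N, 1%:M; rewrite ?mulmx1 //; exists 1, 1, 1; rewrite oner_eq0 diag3_one.
- rewrite !inE => /orP[/eqP-> | /eqP->].
  + exists 0%N, (Fmx n a b); rewrite /= ?mulmx1 //.
    have eta0 : eta_ n != 0 by rewrite expf_neq0 // epi_neq0.
    by exists (eta_ n ^ a), (eta_ n ^ b), (eta_ n ^ (- a - b)); rewrite !expfz_neq0.
  + exists 1%N, 1%:M; first by exists 1, 1, 1; rewrite oner_eq0 diag3_one.
    by rewrite mul1mx /= mulmx1.
- by exists (k + l)%N; exact: Emonomial_mul.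
- by exists (k + k)%N; exact: Emonomial_inv.
Qed.

Definition cube (M : M3) : M3 := M *m M *m M.

(* The cube of D E^k is the diagonal matrix D D' D'' E^(3k) = D D' D''. *)
Lemma Emonomial_cube {k M} : Emonomial k M -> unit_diag (cube M).
Proof.
move=> Mk; have [D uD eM] := Emonomial_mul (Emonomial_mul Mk Mk) Mk.
by rewrite /cube eM Epow_3mul mulmx1.
Qed.

Lemma Cgrp_cubes_commute {n a b} : (0 < n)%N -> forall x y,
  Cgrp n a b x -> Cgrp n a b y -> cube x *m cube y = cube y *m cube x.
Proof.
move=> n_gt0 x y /(Cgrp_Emonomial n_gt0) [k xk] /(Cgrp_Emonomial n_gt0) [l yl].
exact: unit_diag_comm (Emonomial_cube xk) (Emonomial_cube yl).
Qed.

(* In Fr(162 x 4), the cubes of G1 and FUM do not commute: their products in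
   the two orders differ by the factor e79^3 / (-e79)^3 = -1 at entry (0,2). *)
Lemma Fr_cubes_noncommute : cube G1 *m cube FUM != cube FUM *m cube G1.
Proof.
set c := - omega.
have cubeFUM : cube FUM = diag3 (c * c * c) (c * c * c) (c * c * c) *m Jmx.
  by rewrite /cube /FUM /c; mx3_ext.
have cubeG1 : cube G1 = diag3 (e79 * e79 * e79) (- e49 * - e49 * - e49)
                              (- e79 * - e79 * - e79).
  by rewrite /cube /G1 !diag3_mul.
rewrite cubeFUM cubeG1 mulmxA diag3_mul -mulmxA Jmx_diag3 mulmxA diag3_mul.
apply/eqP=> /(congr1 (fun M : M3 => M 0 2)); rewrite !diag3_Jmx_02 => e02.
have : (e79 * e79 * e79 * (c * c * c)) *+ 2 = 0 by rewrite mulr2n {2}e02; ring.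
move/eqP; rewrite mulrn_eq0 /= !mulf_eq0 /c oppr_eq0 /omega /e79 !expf_eq0 /=.
by rewrite (negbTE (@epi_neq0 9 isT)) (negbTE (@epi_neq0 3 isT)).
Qed.

Lemma iso_cubes_commute {gens} {Q : M3 -> Prop} {x y} :
  grp_isomorphic (gen_group gens) Q ->
  (forall u v, Q u -> Q v -> cube u *m cube v = cube v *m cube u) ->
  gen_group gens x -> gen_group gens y -> cube x *m cube y = cube y *m cube x.
Proof.
move=> [f [fQ f_inj _ fM]] Qcubes Px Py.
have Pcube u : gen_group gens u -> gen_group gens (cube u).
  by move=> Pu; do 2 apply: gen_mul => //.
have f_cube u : gen_group gens u -> f (cube u) = cube (f u).
  by move=> Pu; rewrite /cube !fM //; apply: gen_mul.
apply: f_inj; try by apply: gen_mul; apply: Pcube.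
rewrite (fM _ _ (Pcube _ Px) (Pcube _ Py)) (fM _ _ (Pcube _ Py) (Pcube _ Px)).
rewrite !f_cube //; apply: Qcubes; exact: fQ.
Qed.

Theorem theorem11 (n : nat) (a b : int) :
  (0 < n)%N -> ~ grp_isomorphic Fr162x4 (Cgrp n a b).
Proof.
move=> n_gt0 iso; move/negP: Fr_cubes_noncommute; apply; apply/eqP.
have FrG1 : Fr162x4 G1 by apply: gen_base; rewrite !inE eqxx.
have FrFUM : Fr162x4 FUM by apply: gen_base; rewrite !inE eqxx !orbT.
exact: (iso_cubes_commute iso (Cgrp_cubes_commute n_gt0) FrG1 FrFUM).
Qed.
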